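(* Let $\mathbf{f} = (f_n)_{n\ge 1}$ be the ordinary paperfolding word over $\{0,1\}$, let $\rho(n)$ be its abelian complexity function, and for $i\ge1$ let $A(i)=\min\{n\in\mathbb{N} : \rho(n)=i+1\}$. Then for all $i\ge 1$, \[ A(i)=\begin{cases}\dfrac{2^i+1}{3} & \text{if } i \text{ is odd},\\[2mm] \dfrac{2^i+2}{3} & \text{if } i \text{ is even}.\end{cases} \]
   Context: The ordinary paperfolding word $\mathbf{f}=(f_n)_{n\ge1}$ over $\{0,1\}$ is defined as follows: for $n\ge 1$ write $n=n'2^k$ with $n'$ odd; then $f_n=0$ if $n'\equiv 1 \pmod 4$ and $f_n=1$ if $n'\equiv 3\pmod 4$. Thus $\mathbf{f}=0010011000110110\cdots$. A factor of $\mathbf{f}$ is a finite contiguous block $f_i f_{i+1}\cdots f_{i+n-1}$. Two words $u,v$ over $\{0,1\}$ are abelian equivalent if one is a rearrangement of the other. For $n\ge1$, the abelian complexity $\rho(n)$ is the number of abelian equivalence classes among the factors of $\mathbf{f}$ of length $n$. Here $\mathbb{N}=\{1,2,3,\dots\}$. *)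

From mathcomp Require Import all_boot.
From mathcomp Require Import boolp.
Set Implicit Arguments. Unset Strict Implicit. Unset Printing Implicit Defensive.

(* Ordinary paperfolding word, indexed from 1 (value at 0 is irrelevant):
   n = n' 2^k with n' odd; f_n = 0 (false) if n' = 1 mod 4, 1 (true) if n' = 3 mod 4. *)
Definition odd_part (n : nat) : nat := n %/ 2 ^ (logn 2 n).
Definition pf (n : nat) : bool := odd_part n %% 4 == 3.

Definition factor (i n : nat) : n.-tuple bool := [tuple pf (i + j) | j < n].

Definition factors (n : nat) : {set n.-tuple bool} :=
  [set w | `[< exists i, 0 < i /\ w = factor i n >]].

Definition abelian_eq (n : nat) (u v : n.-tuple bool) : bool := perm_eq u v.

Definition rho (n : nat) : nat :=
  #|equivalence_partition (@abelian_eq n) (factors n)|.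

From mathcomp Require Import all_boot.
From mathcomp Require Import zify boolp.
Set Implicit Arguments. Unset Strict Implicit. Unset Printing Implicit Defensive.

(* Two factors of the same length are abelian equivalent iff they have the same
   number of 1s, and sliding a factor by one position changes that weight by at
   most one, so rho(n) counts the weights between the extreme ones.  Since
   f_{2m} = f_m and f_{2m+1} = [m odd], the even positions of a factor spell a
   factor of half the length and the odd positions an alternating word; by
   induction the discrepancy |2 weight - n| stays at most j while
   n < A(j+1), where A(j+1) = 2 A(j) - [j even].  Explicit factors of length
   A(i) reach the discrepancies -i and +i, so rho(A(i)) = i + 1, whereas
   rho(n) <= i for n < A(i). *)

Lemma pf_double p : pf p.*2 = pf p.
Proof.
rewrite /pf /odd_part -mul2n; case: p => [//|p].
by rewrite lognM // logn_prime // eqxx expnD expn1 divnMl.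
Qed.

Lemma pf_doubleS p : pf p.*2.+1 = odd p.
Proof.
rewrite /pf /odd_part.
have -> : logn 2 p.*2.+1 = 0 by rewrite lognE dvdn2 /= odd_double.
by rewrite expn0 divn1; apply/eqP; case: ifP; lia.
Qed.

Fixpoint A j := if j is j'.+1 then (A j').*2 - ~~ odd j' else 1.

Lemma A_closed j : 3 * A j = 2 ^ j + (if odd j then 1 else 2).
Proof. elim: j => [//|j IH] /=; rewrite expnS; case: (odd j) IH => /= IH; lia. Qed.

Lemma A_gt0 j : 0 < A j.
Proof. have := A_closed j; have := expn_gt0 2 j; case: (odd j); lia. Qed.

Lemma A_odd j : 0 < j -> odd (A j) = odd j.
Proof.
case: j => [//|j] _; have := A_closed j.+1; rewrite expnS.
by case: (odd j.+1); lia.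
Qed.

Lemma A_ltS j : 0 < j -> A j < A j.+1.
Proof.
move=> j_gt0; have := A_closed j; have := A_closed j.+1; rewrite expnS /=.
have : 2 <= 2 ^ j by rewrite -{1}(expn1 2) leq_exp2l.
case: (odd j) => /=; lia.
Qed.

Definition weight x n := count pf (iota x n).

Lemma weight_le x n : weight x n <= n.
Proof. by rewrite /weight -{2}(size_iota x n) count_size. Qed.

Lemma weightS x n : weight x n.+1 = pf x + weight x.+1 n.
Proof. by []. Qed.

Lemma weightSr x n : weight x n.+1 = weight x n + pf (x + n).
Proof. by rewrite /weight -addn1 iotaD count_cat /= addn0. Qed.

Lemma count_odd_iota q n :
  count odd (iota q n) = if odd q then uphalf n else n./2.
Proof.
elim: n q => [|n IH] q /=; first by case: odd.
by rewrite IH /=; case: (odd q); rewrite /= ?uphalf_half; lia.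
Qed.

Lemma weight_double p n :
  weight p.*2 n = weight p (uphalf n) + count odd (iota p n./2) /\
  weight p.*2.+1 n = weight p.+1 n./2 + count odd (iota p (uphalf n)).
Proof.
elim: n p => [|n IH] p; first by [].
rewrite -[uphalf n.+1]/(n./2.+1) -[n.+1./2]/(uphalf n).
rewrite !weightS pf_double pf_doubleS -doubleS.
have [-> _] := IH p.+1; have [_ ->] := IH p.
by rewrite /= addnA addnCA.
Qed.

Lemma weight_discrepancy j x n :
  n < A j.+1 -> n <= (weight x n).*2 + j /\ (weight x n).*2 <= n + j.
Proof.
elim/ltn_ind: n x j => n IH x j n_lt.
have w_le := weight_le x n.
case: (leqP n j) => [|j_lt_n]; first lia.
case: j n_lt j_lt_n => [|j] n_lt j_lt_n; first by move: n_lt; rewrite /=; lia.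
have A_S : A j.+2 = (A j.+1).*2 - ~~ odd j.+1 by [].
have lt_half : n./2 < n by lia.
have lt_uphalf : uphalf n < n by lia.
rewrite -(odd_double_half x); case: (odd x); rewrite /= ?add0n.
- have [_ ->] := weight_double x./2 n; rewrite count_odd_iota.
  have := IH _ lt_half x./2.+1 j; have := IH _ lt_half x./2.+1 j.+1.
  case: (odd x./2); lia.
- have [-> _] := weight_double x./2 n; rewrite count_odd_iota.
  have := IH _ lt_uphalf x./2 j; have := IH _ lt_uphalf x./2 j.+1.
  case: (odd x./2); lia.
Qed.

Lemma weight_min i : 0 < i -> (weight (2 ^ i) (A i)).*2 + i = A i.
Proof.
elim: i => [//|i IH] _; case: (posnP i) => [-> //|i_gt0].
have := IH i_gt0; have := A_odd i_gt0; have A_S : A i.+1 = (A i).*2 - ~~ odd i by [].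
rewrite expnS mul2n; have [-> _] := weight_double (2 ^ i) (A i.+1).
have -> : uphalf (A i.+1) = A i by rewrite A_S; case: (odd i); lia.
rewrite count_odd_iota oddX (gtn_eqF i_gt0) /=.
case: (odd i) A_S; lia.
Qed.

Lemma weight_max i : 0 < i -> (weight (A (i + 3)) (A i)).*2 = A i + i.
Proof.
elim: i => [//|i IH] _; case: (posnP i) => [-> //|i_gt0].
have Ai_odd := A_odd i_gt0; have Ai_gt0 := A_gt0 i.
have A_S : A i.+1 = (A i).*2 - ~~ odd i by [].
have A_S3 : A (i.+1 + 3) = (A (i + 3)).*2 - odd i by rewrite addSn /=; lia.
have q_odd : odd (A (i + 3)) = ~~ odd i by rewrite A_odd ?addn3 //=; lia.
have q_gt0 := A_gt0 (i + 3); rewrite A_S3.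
move: (IH i_gt0) q_odd q_gt0; move: (A (i + 3)) => q IHq q_odd q_gt0.
case: (odd i) A_S q_odd Ai_odd => A_S q_odd Ai_odd.
- rewrite (_ : q.*2 - true = q.-1.*2.+1); last lia.
  have [_ ->] := weight_double q.-1 (A i.+1).
  rewrite prednK // count_odd_iota (_ : (A i.+1)./2 = A i); last lia.
  case: ifP; lia.
- rewrite (_ : q.*2 - false = q.*2); last lia.
  have [-> _] := weight_double q (A i.+1).
  rewrite count_odd_iota (_ : uphalf (A i.+1) = A i); last lia.
  case: ifP; lia.
Qed.

Lemma weight_slide x n :
  weight x.+1 n <= (weight x n).+1 /\ weight x n <= (weight x.+1 n).+1.
Proof.
have := weightS x n; rewrite weightSr.
by case: (pf x); case: (pf (x + n)); rewrite /=; lia.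
Qed.

Lemma nat_ivt (f : nat -> nat) x y v :
  (forall z, f z.+1 <= (f z).+1 /\ f z <= (f z.+1).+1) ->
  f x <= v -> v <= f y -> exists2 z, minn x y <= z & f z = v.
Proof.
move=> f_lip.
have reach u d : minn (f u) (f (u + d)) <= v -> v <= maxn (f u) (f (u + d)) ->
    exists2 z, u <= z & f z = v.
  elim: d => [|d IH] v_lo v_hi; first by rewrite addn0 in v_lo v_hi; exists u; lia.
  have := f_lip (u + d); rewrite addnS in v_lo v_hi => lip.
  case: (leqP (minn (f u) (f (u + d))) v) => v_lo'; last by exists (u + d).+1; lia.
  case: (leqP v (maxn (f u) (f (u + d)))) => v_hi'; last by exists (u + d).+1; lia.
  exact: IH.
move=> v_lo v_hi; case: (leqP x y) => [le_xy|lt_yx].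
- have [||z le_xz fz] := reach x (y - x); rewrite ?subnKC //; try lia.
  by exists z; first lia.
- have [||z le_yz fz] := reach y (x - y); rewrite ?subnKC //; try lia.
  by exists z; first lia.
Qed.

Section Window.

Variables (N lo m : nat) (S : {set 'I_N}).
Hypothesis S_window : {in S, forall k : 'I_N, lo <= k <= lo + m}.

Let shift (k : 'I_N) : 'I_m.+1 := inord (k - lo).

Let shift_inj : {in S &, injective shift}.
Proof.
move=> k l /S_window/andP[k_lo k_hi] /S_window/andP[l_lo l_hi] /(congr1 val).
by rewrite /= !inordK; [move=> eq_kl; apply: ord_inj; lia | lia | lia].
Qed.

Lemma card_window_le : #|S| <= m.+1.
Proof.
by rewrite -(card_in_imset shift_inj); apply: leq_trans (max_card _) _; rewrite card_ord.
Qed.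

Lemma card_window_full :
  (forall k, lo <= k <= lo + m -> exists2 s, s \in S & s = k :> nat) -> #|S| = m.+1.
Proof.
move=> S_full; rewrite -(card_in_imset shift_inj) -[RHS](card_ord m.+1) -cardsT.
congr #|pred_of_set _|; apply/setP => j; rewrite inE; apply/imsetP.
have [|s s_in s_val] := S_full (lo + j); first by have := ltn_ord j; lia.
by exists s => //; apply: ord_inj; rewrite /shift s_val addKn inordK.
Qed.

End Window.

Lemma card_preim_partition (T U : finType) (f : T -> U) (D : {set T}) :
  #|preim_partition f D| = #|f @: D|.
Proof.
pose fiber u := [set y in D | f y == u].
have -> : preim_partition f D = fiber @: (f @: D).
  rewrite -imset_comp; apply: eq_imset => x; apply/setP => y.
  by rewrite !inE eq_sym.
apply: card_in_imset => _ _ /imsetP[x Dx ->] /imsetP[y Dy ->] /setP/(_ x).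
by rewrite !inE Dx eqxx => /esym/eqP.
Qed.

Lemma perm_eq_bool (s t : seq bool) :
  size s = size t -> perm_eq s t = (count id s == count id t).
Proof.
move=> size_st; apply/permP/eqP => [-> // | count_st p].
have count_pred (u : seq bool) :
    count p u = p true * count id u + p false * (size u - count id u).
  elim: u => [|b u IH] /=; first by rewrite !muln0.
  by rewrite IH; have := count_size id u; case: b; case: (p true); case: (p false); lia.
by rewrite !count_pred size_st count_st.
Qed.

Lemma count_factor x n : count id (factor x n) = weight x n.
Proof.
rewrite /factor /weight /= -[x]addn0 iotaDl -val_enum_ord -!map_comp !count_map.
by apply: eq_count => j; rewrite /= addn0.
Qed.

Definition weight_set n : {set 'I_n.+1} :=
  [set inord (count id w) | w : n.-tuple bool in factors n].

Lemma rho_weight_set n : rho n = #|weight_set n|.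
Proof.
have count_lt (w : n.-tuple bool) : count id w < n.+1.
  by have := count_size id w; rewrite size_tuple.
rewrite /rho /weight_set -[X in _ = X]card_preim_partition; congr #|pred_of_set _|.
apply: eq_imset => u; apply/setP => v; rewrite !inE /abelian_eq perm_eq_bool ?size_tuple //.
by congr (_ && _); apply/eqP/eqP => [->|/(congr1 val)]; rewrite //= !inordK.
Qed.

Lemma weight_setP n (k : 'I_n.+1) :
  reflect (exists2 x, 0 < x & weight x n = k) (k \in weight_set n).
Proof.
apply: (iffP imsetP) => [[w /[1!inE] /asboolP[x [x_gt0 ->]] ->]|[x x_gt0 w_x]].
  by exists x; rewrite // count_factor inordK // ltnS weight_le.
exists (factor x n); first by rewrite inE; apply/asboolP; exists x.
by apply: ord_inj; rewrite count_factor w_x inord_val.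
Qed.

Lemma rho_A i : 0 < i -> rho (A i) = i.+1.
Proof.
move=> i_gt0; have := weight_min i_gt0; have := weight_max i_gt0; have := A_odd i_gt0.
rewrite rho_weight_set => Ai_odd w_max w_min.
apply: (@card_window_full _ (A i - i)./2) => [k /weight_setP[x _ <-]|k k_window].
  by have := weight_discrepancy x (A_ltS i_gt0); lia.
have [||x x_ge w_x] := nat_ivt (weight_slide ^~ (A i)) (x := 2 ^ i) (y := A (i + 3)) (v := k).
  1, 2: lia.
have x_gt0 : 0 < x by have := A_gt0 (i + 3); have := expn_gt0 2 i; lia.
have w_lt : weight x (A i) < (A i).+1 by rewrite ltnS weight_le.
exists (inord (weight x (A i))); last by rewrite inordK.
by apply/weight_setP; exists x; rewrite ?inordK.
Qed.

Lemma rho_lt_A i n : 0 < i -> n < A i -> rho n <= i.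
Proof.
move=> i_gt0; rewrite -{1}(prednK i_gt0) => n_lt.
rewrite rho_weight_set -(prednK i_gt0); apply: (@card_window_le _ (uphalf (n - i.-1))).
by move=> k /weight_setP[x _ <-]; have := weight_discrepancy x n_lt; lia.
Qed.

Theorem proposition3 (i : nat) (hi : 0 < i) :
  let a := if odd i then (2 ^ i + 1) %/ 3 else (2 ^ i + 2) %/ 3 in
  [/\ 0 < a, rho a = i.+1 & forall n, 0 < n -> rho n = i.+1 -> a <= n].
Proof.
have -> : (if odd i then (2 ^ i + 1) %/ 3 else (2 ^ i + 2) %/ 3) = A i.
  by have := A_closed i; case: (odd i) => <-; rewrite mulKn.
split; [exact: A_gt0 | exact: rho_A |].
move=> n _ rho_n; rewrite leqNgt; apply/negP => /(rho_lt_A hi).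
by rewrite rho_n ltnn.
Qed.
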